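(* Under the same independence assumptions, for any two instances $\mathbf x,\mathbf y$: if $\lim_{n\to\infty}P(\mathbf y\in L(\mathbf x)\mid\mathcal D)=0$ then $P(\mathbf y\in\bar I(\mathbf x)\mid\mathcal D)=0$; if $\lim_{n\to\infty}P(\mathbf y\in L(\mathbf x)\mid\mathcal D)>0$ then $P(\mathbf y\in\bar I(\mathbf x)\mid\mathcal D)=1$.
   Context: Setting: $n$ instances with covariates in $\mathbb R^d$ form the dataset $\mathcal D=\mathcal D_n$; a forest $\Theta_K$ of $K$ axis-aligned causal trees is built on $\mathcal D$, the trees being independent given $\mathcal D$. $L_k(\mathbf x)$ is the leaf of tree $k$ containing $\mathbf x$ and $I(\mathbf x,\theta_k)$ its box; $P(\mathbf y\in L(\mathbf x)\mid\mathcal D)$ denotes $P(\mathbf y\in L_k(\mathbf x)\mid\mathcal D)$, the same for every $k$, and the events $\{\mathbf y\in L_k(\mathbf x)\}$, $k=1,\dots,K$, are independent given $\mathcal D$. LSLI with $K$ trees: $\bar I(\mathbf x,\Theta_K)=\bigcap_{s>K-\sqrt K}\bigcap_{1\le i_1<\cdots<i_s\le K}\bigcup_{k=1}^sI(\mathbf x,\theta_{i_k})$, and $P(\mathbf y\in\bar I(\mathbf x)\mid\mathcal D):=\lim_{K\to\infty}\lim_{n\to\infty}P(\mathbf y\in\bar I(\mathbf x,\Theta_K)\mid\mathcal D_n)$. *)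

From HB Require Import structures.
From mathcomp Require Import all_boot all_order all_algebra.
From mathcomp Require Import all_classical all_reals all_analysis.
Set Implicit Arguments. Unset Strict Implicit. Unset Printing Implicit Defensive.
Import Order.TTheory GRing.Theory Num.Theory.
Import numFieldNormedType.Exports.
Local Open Scope classical_set_scope.
Local Open Scope ring_scope.

Definition mutually_independent_events {d : measure_display}
  {T : measurableType d} {R : realType} (P : probability T R)
  (E : nat -> set T) : Prop :=
  forall s : seq nat, uniq s ->
    P (\big[setI/setT]_(k <- s) E k) = (\prod_(k <- s) P (E k))%E.

Definition axis_aligned_box {R : realType} (dim : nat) (B : set 'rV[R]_dim) :
  Prop :=
  exists J : 'I_dim -> interval R, B = [set z | forall i, z 0 i \in J i].

Definition LSLI {R : realType} {V : Type} (K : nat) (I : nat -> set V) : set V :=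
  \bigcap_(s in [set s : nat | K%:R - Num.sqrt (K%:R : R) < s%:R])
    \bigcap_(S in [set S : {set 'I_K} | #|S| = s])
      \bigcup_(k in [set k : 'I_K | k \in S]) I (nat_of_ord k).

(** An LSLI region of K trees contains [y] exactly when [y] lies in the boxes
    of at least sqrt K of them.  Given the dataset the K events
    "[y] is in the box of tree k" are independent with a common probability
    [p], so the probability of the LSLI region is the binomial tail
    [sqrt_tail K p], a polynomial in [p]; letting n go to infinity replaces [p]
    by its limit [l].  For [l = 0] the tail vanishes as soon as [K > 0].  For
    [l > 0] the complementary mass, carried by fewer than sqrt K successes, is
    at most [2 ^ sqrt K * (1 - l/2) ^ K], which tends to 0. *)

From HB Require Import structures.
From mathcomp Require Import all_boot all_order all_algebra.
From mathcomp Require Import all_classical all_reals all_analysis.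
From mathcomp Require Import ring lra.
Import Order.TTheory GRing.Theory Num.Theory.
Import numFieldNormedType.Exports.
Local Open Scope classical_set_scope.
Local Open Scope ring_scope.

Lemma measure_big_setU (d : measure_display) (T : measurableType d)
    (R : realType) (mu : {content set T -> \bar R}) (I : choiceType)
    (s : seq I) (F : I -> set T) :
  uniq s -> (forall i, measurable (F i)) ->
  (forall i j, i != j -> F i `&` F j = set0) ->
  mu (\big[setU/set0]_(i <- s) F i) = (\sum_(i <- s) mu (F i))%E.
Proof.
move=> + mF dF; elim: s => [|j s IH]; first by rewrite !big_nil measure0.
move=> /andP[js us]; rewrite !big_cons measureU //.
- by rewrite IH.
- by apply: bigsetU_measurable => i _.
- rewrite -bigcup_seq; apply/seteqP; split => // w [Fj [i /= si Fi]].
  have ji : j != i by apply: contraNneq js => ->.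
  by have : (F j `&` F i) w by []; rewrite dF.
Qed.

Section independent_events.
Context {d : measure_display} {T : measurableType d} {R : realType}.
Context {P : probability T R} {A : nat -> set T} {p : R}.
Hypotheses (mA : forall k, measurable (A k))
  (indA : mutually_independent_events P A) (PA : forall k, P (A k) = p%:E).

(* Induction on [t], using [P (X `\` A j) = P X - P (X `&` A j)]. *)
Lemma prob_independent_atom (s t : seq nat) : uniq (s ++ t) ->
  P (\big[setI/setT]_(k <- s) A k `&` \big[setI/setT]_(k <- t) ~` A k)
  = (p ^+ size s * (1 - p) ^+ size t)%:E.
Proof.
elim: t s => [|j t IH] s ust.
  rewrite big_nil setIT expr0 mulr1 indA; last by rewrite cats0 in ust.
  by rewrite (eq_bigr (fun=> p%:E)) // prodEFin big_const_seq count_predT iter_mulr_1.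
have mX s' : measurable (\big[setI/setT]_(k <- s') A k `&`
                         \big[setI/setT]_(k <- t) ~` A k).
  by apply: measurableI; apply: bigsetI_measurable => k _ //; apply: measurableC.
have ujst : uniq ((j :: s) ++ t).
  by rewrite (perm_uniq (permEl (perm_catCA [:: j] s t))).
have ust' : uniq (s ++ t) by case/andP: ujst.
rewrite big_cons setICA setIC -setDE measureD //; last first.
  by apply: le_lt_trans (probability_le1 _ (mX s)) _; rewrite ltry.
have -> : \big[setI/setT]_(k <- s) A k `&` \big[setI/setT]_(k <- t) ~` A k `&` A j
          = \big[setI/setT]_(k <- j :: s) A k `&` \big[setI/setT]_(k <- t) ~` A k.
  by rewrite big_cons setIAC (setIC _ (A j)).
transitivity ((p ^+ size s * (1 - p) ^+ size t)%:E -
              (p ^+ size (j :: s) * (1 - p) ^+ size t)%:E)%E.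
  by congr (_ - _)%E; apply: IH.
by rewrite -EFinB /= !exprS; congr _%:E; ring.
Qed.

End independent_events.

Definition sqrt_tail {R : realType} (K : nat) (p : R) : R :=
  \sum_(S : {set 'I_K} | Num.sqrt (K%:R : R) <= #|S|%:R)
     p ^+ #|S| * (1 - p) ^+ (K - #|S|).

Lemma cardsC_ord {K : nat} (S : {set 'I_K}) : #|~: S| = (K - #|S|)%N.
Proof.
have SK : (#|S| <= K)%N by rewrite -[X in (_ <= X)%N]card_ord max_card.
by apply/eqP; rewrite -(eqn_add2l #|S|) cardsC card_ord subnKC.
Qed.

Lemma in_LSLI (R : realType) (V : Type) (K : nat) (I : nat -> set V) (v : V) :
  @LSLI R V K I v <->
  Num.sqrt (K%:R : R) <= #|[set i : 'I_K | `[< I i v >]]%SET|%:R.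
Proof.
set Sv := [set i : 'I_K | `[< I i v >]]%SET.
have SvK : (#|Sv| <= K)%N by rewrite -[X in (_ <= X)%N]card_ord max_card.
split => [LSLIv | le_sqrt s /= lt_s S /= cardS].
- (* the trees avoiding [v] form a family of size K - #|Sv| with empty union *)
  rewrite leNgt; apply/negP => lt_Sv.
  have lt_s : K%:R - Num.sqrt (K%:R : R) < (K - #|Sv|)%:R by rewrite natrB //; lra.
  have [k /= kSv Ikv] := LSLIv (K - #|Sv|)%N lt_s (~: Sv) (cardsC_ord Sv).
  by move: kSv; rewrite finset.in_setC finset.in_set asboolT.
- apply: contrapT => noI.
  have SCSv : S \subset ~: Sv.
    apply/fintype.subsetP => k kS; rewrite finset.in_setC finset.in_set.
    by apply/negP => /asboolP Ikv; apply: noI; exists k.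
  have := subset_leq_card SCSv; rewrite cardsC_ord cardS -(ler_nat R) natrB //.
  lra.
Qed.

Section LSLI_probability.
Context {d : measure_display} {T : measurableType d} {R : realType}.
Context {P : probability T R} {V : Type} {B : nat -> T -> set V} {v : V} {p : R}.
Variable K : nat.
Hypotheses (mB : forall k, measurable [set w | B k w v])
  (indB : mutually_independent_events P (fun k => [set w | B k w v]))
  (PB : forall k, P [set w | B k w v] = p%:E).

Let trees_at w := [set i : 'I_K | `[< B i w v >]]%SET.

Let atom (S : {set 'I_K}) :=
  \big[setI/setT]_(k <- [seq val i | i <- enum S]) [set w | B k w v] `&`
  \big[setI/setT]_(k <- [seq val i | i <- enum (~: S)]) ~` [set w | B k w v].

Let atomE S : atom S = [set w | trees_at w = S].
Proof.
rewrite /atom -!bigcap_seq; apply/seteqP; split => w /=.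
- move=> [inS notinS]; apply/setP => i; rewrite finset.in_set.
  have [iS|iNS] := boolP (i \in S); [apply/asboolP | apply/asboolPn].
  + by apply: inS; apply/mapP; exists i; rewrite ?mem_enum.
  + by apply: notinS; apply/mapP; exists i; rewrite ?mem_enum ?finset.in_setC.
- move=> <-; split => k /mapP[i].
  + by rewrite mem_enum finset.in_set => /asboolP ? ->.
  + by rewrite mem_enum finset.in_setC finset.in_set => /asboolPn ? ->.
Qed.

Let prob_atom S : P (atom S) = (p ^+ #|S| * (1 - p) ^+ (K - #|S|))%:E.
Proof.
have := prob_independent_atom mB indB PB [seq val i | i <- enum S]
  [seq val i | i <- enum (~: S)].
rewrite !size_map -!cardE cardsC_ord; apply.
rewrite -map_cat (map_inj_uniq val_inj) cat_uniq !enum_uniq /= andbT.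
by apply/hasPn => i; rewrite !mem_enum finset.in_setC.
Qed.

Lemma prob_LSLI :
  P [set w | @LSLI R V K (fun k => B k w) v] = (sqrt_tail K p)%:E.
Proof.
have LSLIE : [set w | @LSLI R V K (fun k => B k w) v] =
    \big[setU/set0]_(S <- index_enum {set 'I_K} |
                     Num.sqrt (K%:R : R) <= #|S|%:R) atom S.
  rewrite -bigcup_seq_cond; apply/seteqP; split => w /=.
  - move=> /in_LSLI le_sqrt; exists (trees_at w); last by rewrite atomE.
    by rewrite /= mem_index_enum le_sqrt.
  - move=> [S /andP[_ le_sqrt]]; rewrite atomE /= => treesS.
    by apply/in_LSLI; rewrite -/(trees_at w) treesS.
rewrite LSLIE -big_filter measure_big_setU ?filter_uniq ?index_enum_uniq //.
- by rewrite big_filter /sqrt_tail -sumEFin; apply: eq_bigr => S _; apply: prob_atom.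
- move=> S; apply: measurableI; apply: bigsetI_measurable => k _ //.
  exact: measurableC.
- move=> S S' /eqP neqSS'; rewrite !atomE; apply/seteqP; split => // w [/= tS tS'].
  by apply: neqSS'; rewrite -tS -tS'.
Qed.

End LSLI_probability.

Section sqrt_tail_limits.
Variable R : realType.

Lemma cvg_sqrt_tail (K : nat) (u : nat -> R) (l : R) :
  u @ \oo --> l -> (fun n => sqrt_tail K (u n)) @ \oo --> sqrt_tail K l.
Proof.
move=> ul; apply: cvg_big => [|S _]; first exact: add_continuous.
have cvgX (f : nat -> R) (a : R) m :
    f @ \oo --> a -> (fun n => f n ^+ m) @ \oo --> a ^+ m.
  by move=> fa; have := cvg_comp _ _ fa (@exprn_continuous R m a).
by apply: cvgM; apply: cvgX => //; apply: cvgB => //; exact: cvg_cst.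
Qed.

Lemma sqrt_tail0 (K : nat) : (0 < K)%N -> sqrt_tail K (0 : R) = 0.
Proof.
move=> K_gt0; rewrite /sqrt_tail big1 // => S le_sqrt.
have sqrt_ge1 : 1 <= Num.sqrt (K%:R : R).
  by rewrite -[X in X <= _]sqrtr1 ler_sqrt // ler1n.
have : (0 < #|S|)%N by rewrite -(ltr_nat R); apply: lt_le_trans le_sqrt; lra.
by case: #|S| => // j _; rewrite expr0n /= mul0r.
Qed.

Lemma sum_set_binomial (K : nat) (a b : R) :
  \sum_(S : {set 'I_K}) a ^+ #|S| * b ^+ (K - #|S|) = (a + b) ^+ K.
Proof.
rewrite -[K in RHS]card_ord -prodr_const bigA_distr; apply: eq_bigr => S _.
rewrite (bigID (mem S)) /= -cardsC_ord -!prodr_const.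
congr (_ * _); apply: eq_big => [i|i]; rewrite ?finset.in_setC //.
- by move=> ->.
- by move=> /negbTE ->.
Qed.

Lemma expr_eventually_le (z e : R) : 0 <= z < 1 -> 0 < e ->
  exists N, forall n, (N <= n)%N -> z ^+ n <= e.
Proof.
move=> /andP[z_ge0 z_lt1] e_gt0.
have z_norm : `|z| < 1 by rewrite ger0_norm.
have [N _ zN] :=
  @cvgr0_norm_le _ _ _ _ _ (fun n => z ^+ n) (cvg_expr z_norm) e e_gt0.
by exists N => n /zN; rewrite /= ger0_norm // exprn_ge0.
Qed.

(* For [j < N] the factor [r ^+ K] wins; for [j >= N] already
   [2 * r ^+ j <= 1/2] and [r ^+ K <= r ^+ (j * j)]. *)
Lemma pow2_expr_sqrt_le (r e : R) : 0 <= r < 1 -> 0 < e ->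
  exists K0, forall K j, (K0 <= K)%N -> (j * j < K)%N -> 2 ^+ j * r ^+ K <= e.
Proof.
move=> /andP[r_ge0 r_lt1] e_gt0.
have [N1 rN1] : exists N, forall n, (N <= n)%N -> r ^+ n <= 1/4.
  by apply: expr_eventually_le; rewrite ?r_ge0 //; lra.
have [N2 halfN2] : exists N, forall n, (N <= n)%N -> (1/2) ^+ n <= e.
  by apply: expr_eventually_le => //; apply/andP; split; lra.
pose N := maxn N1 N2.
have [K0 rK0] : exists K0, forall K, (K0 <= K)%N -> r ^+ K <= e / 2 ^+ N.
  by apply: expr_eventually_le; rewrite ?r_ge0 ?divr_gt0 ?exprn_gt0.
exists K0 => K j K0K jjK.
have [jN|Nj] := ltnP j N.
- have pow2jN : 2 ^+ j <= 2 ^+ N :> R.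
    by apply: ler_weXn2l; [rewrite ler1n | exact: ltnW].
  have := rK0 K K0K; rewrite ler_pdivlMr ?exprn_gt0 // mulrC => h.
  by apply: le_trans h; apply: ler_wpM2r; rewrite ?exprn_ge0.
- have r_le1 : r <= 1 by exact: ltW.
  have rj : r ^+ j <= 1/4.
    by apply: le_trans (rN1 N (leq_maxl _ _)); apply: ler_wiXn2l.
  have rj_ge0 : 0 <= r ^+ j by rewrite exprn_ge0.
  have halfj : (1/2) ^+ j <= e.
    by apply: le_trans (halfN2 N (leq_maxr _ _)); apply: ler_wiXn2l => //; lra.
  have rK : r ^+ K <= r ^+ (j * j) by apply: ler_wiXn2l => //; exact: ltnW.
  have two_rj : 2 * r ^+ j <= 1/2 by lra.
  have pow2_rK : 2 ^+ j * r ^+ K <= 2 ^+ j * r ^+ (j * j).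
    by apply: ler_wpM2l; rewrite ?exprn_ge0.
  apply: le_trans pow2_rK _; apply: le_trans halfj.
  by rewrite exprM -exprMn; apply: lerXn2r; rewrite ?nnegrE ?mulr_ge0 //; lra.
Qed.

(* The complement of the tail is carried by the sets of size below sqrt K;
   writing [l ^+ j = 2 ^+ j * (l / 2) ^+ j] bounds it by [c] times the
   binomial sum for [l / 2] and [1 - l]. *)
Lemma sqrt_tail_compl_le (K : nat) (l c : R) : 0 < l <= 1 -> 0 <= c ->
    (forall j, (j * j < K)%N -> 2 ^+ j <= c) ->
  0 <= 1 - sqrt_tail K l <= c * (1 - l / 2) ^+ K.
Proof.
move=> /andP[l_gt0 l_le1] c_ge0 pow2_le.
pose good (S : {set 'I_K}) := Num.sqrt (K%:R : R) <= #|S|%:R.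
pose w (a : R) (S : {set 'I_K}) := a ^+ #|S| * (1 - l) ^+ (K - #|S|).
have w_ge0 a S : 0 <= a -> 0 <= w a S.
  by move=> a_ge0; rewrite mulr_ge0 ?exprn_ge0 ?subr_ge0.
have complE : 1 - sqrt_tail K l = \sum_(S | ~~ good S) w l S.
  have := sum_set_binomial K l (1 - l); rewrite (addrC l) subrK expr1n.
  by rewrite (bigID good) /= => <-; rewrite addrC addrK.
have small_bad S : ~~ good S -> (#|S| * #|S| < K)%N.
  rewrite -ltNge -(ltr_nat R) natrM => lt_sqrt.
  have sqrtK2 : Num.sqrt (K%:R : R) ^+ 2 = K%:R by rewrite sqr_sqrtr.
  have S_ge0 : (0 : R) <= #|S|%:R by [].
  have := sqrtr_ge0 (K%:R : R); nra.
rewrite complE; apply/andP; split.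
  by apply: sumr_ge0 => S _; rewrite w_ge0 ?ltW.
apply: le_trans (_ : \sum_(S | ~~ good S) c * w (l / 2) S <= _).
  apply: ler_sum => S badS; rewrite /w mulrA.
  apply: ler_wpM2r; first by rewrite exprn_ge0 ?subr_ge0.
  have -> : l ^+ #|S| = 2 ^+ #|S| * (l / 2) ^+ #|S|.
    by rewrite -exprMn mulrC divfK ?pnatr_eq0.
  by apply: ler_wpM2r; [rewrite exprn_ge0 // divr_ge0 ?ltW | exact/pow2_le/small_bad].
rewrite -mulr_sumr; apply: ler_wpM2l => //.
rewrite (_ : 1 - l / 2 = l / 2 + (1 - l)) -?sum_set_binomial; last by lra.
rewrite [leRHS](bigID good) /= lerDr.
by apply: sumr_ge0 => S _; rewrite w_ge0 ?divr_ge0 ?ltW.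
Qed.

Lemma cvg_sqrt_tail1 (l : R) : 0 < l <= 1 ->
  (fun K => sqrt_tail K l) @ \oo --> (1 : R).
Proof.
move=> l01; have /andP[l_gt0 l_le1] := l01.
apply/cvgrPdist_le => e e_gt0.
set r := 1 - l / 2.
have r_gt0 : 0 < r by rewrite /r; lra.
have [K0 pow2_le] : exists K0, forall K j, (K0 <= K)%N -> (j * j < K)%N ->
    2 ^+ j * r ^+ K <= e.
  by apply: pow2_expr_sqrt_le => //; apply/andP; split; rewrite /r; lra.
exists K0 => // K /= K0K.
have rK_gt0 : 0 < r ^+ K by rewrite exprn_gt0.
have pow2_le_div j : (j * j < K)%N -> 2 ^+ j <= e / r ^+ K.
  by move=> jjK; rewrite ler_pdivlMr // pow2_le.
have /andP[compl_ge0 compl_le] := @sqrt_tail_compl_le K l _ l01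
  (ltW (divr_gt0 e_gt0 rK_gt0)) pow2_le_div.
by rewrite ger0_norm //; apply: le_trans compl_le _; rewrite divfK ?gt_eqF.
Qed.

End sqrt_tail_limits.

Theorem mainTheorem6 (R : realType) (dim : nat) (d : measure_display)
  (Omega : nat -> measurableType d) (P : forall n, probability (Omega n) R)
  (Theta : nat -> Type) (theta : forall n, nat -> Omega n -> Theta n)
  (box : forall n, 'rV[R]_dim -> Theta n -> set 'rV[R]_dim)
  (x y : 'rV[R]_dim) :
  (forall n (z : 'rV[R]_dim) (t : Theta n),
      axis_aligned_box (box n z t) /\ box n z t z) ->
  (forall n k, measurable [set w : Omega n | box n x (theta n k w) y]) ->
  (forall n, mutually_independent_events (P n)
               (fun k => [set w : Omega n | box n x (theta n k w) y])) ->
  (forall n k, P n [set w | box n x (theta n k w) y]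
             = P n [set w | box n x (theta n 0%N w) y]) ->
  let pL := fun n => fine (P n [set w | box n x (theta n 0%N w) y]) in
  let pI := fun K n =>
     fine (P n [set w | @LSLI R _ K (fun k => box n x (theta n k w)) y]) in
  ((pL @ \oo --> (0 : R)) ->
     exists a : nat -> R, (forall K, pI K @ \oo --> a K) /\ a @ \oo --> (0 : R))
  /\
  (forall l : R, 0 < l -> pL @ \oo --> l ->
     exists a : nat -> R, (forall K, pI K @ \oo --> a K) /\ a @ \oo --> (1 : R)).
Proof.
move=> _ mL indL eqL pL pI.
have PL n k : P n [set w | box n x (theta n k w) y] = (pL n)%:E.
  by rewrite eqL /pL fineK //; apply: fin_num_measure; exact: mL.
have pIE K : pI K = fun n => sqrt_tail K (pL n).
  by apply: funext => n; rewrite /pI (prob_LSLI K (mL n) (indL n) (PL n)).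
have pL01 n : 0 <= pL n <= 1.
  rewrite -!lee_fin -(PL n 0%N) measure_ge0 /=.
  exact: probability_le1.
split => [pL0 | l l_gt0 pLl].
- exists (fun K => sqrt_tail K 0); split => [K|].
    by rewrite pIE; apply: cvg_sqrt_tail.
  by apply: cvg_near_cst; exists 1%N => // K; apply: sqrt_tail0.
- exists (fun K => sqrt_tail K l); split => [K|].
    by rewrite pIE; apply: cvg_sqrt_tail.
  apply: cvg_sqrt_tail1; rewrite l_gt0 -(cvg_lim _ pLl) //.
  apply: limr_le; first exact: cvgP pLl.
  by apply: nearW => n; case/andP: (pL01 n).
Qed.
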